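(* Run APAPC with $\eta=\frac1{4\tau L}$, $\theta=\frac1{\eta\lambda_{\max}(\mathbf{W})}$, $\alpha=\mu$, $\tau=\min\left\{1,\frac12\sqrt{\frac\mu L\frac{\lambda_{\max}(\mathbf{W})}{\lambda_{\min}^+(\mathbf{W})}}\right\}$, and define \[ \Psi^k := \frac1\eta\|x^k-x^*\|^2 + \Big\langle \big(\tfrac1\theta\mathbf{W}^\dagger - (1+\eta\alpha)^{-1}\eta\mathbf{I}\big)(y^k-y^* ),\,y^k-y^*\Big\rangle + \frac{2(1-\tau)}{\tau}\mathrm{D}_F(x_f^k,x^* ). \] Then for every $k\ge0$, \[ \Psi^{k+1}\le\left(1+\frac14\min\left\{\sqrt{\frac\mu L\frac{\lambda_{\min}^+(\mathbf{W})}{\lambda_{\max}(\mathbf{W})}},\ \frac{\lambda_{\min}^+(\mathbf{W})}{\lambda_{\max}(\mathbf{W})}\right\}\right)^{-1}\Psi^k. \]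
   Context: $F:\mathbb{R}^{nd}\to\mathbb{R}$ is differentiable, $\mu$-strongly convex and $L$-smooth, $0<\mu\le L$. $\mathbf{W}$ is a symmetric positive semidefinite $nd\times nd$ matrix whose kernel is the consensus space $\{(x_1,\dots,x_n)\in(\mathbb{R}^d)^n:x_1=\dots=x_n\}$, with largest eigenvalue $\lambda_{\max}(\mathbf{W})$ and smallest positive eigenvalue $\lambda_{\min}^+(\mathbf{W})$. $\mathbf{W}^\dagger$ is the inverse of $\mathbf{W}$ restricted to $\mathrm{range}(\mathbf{W})$. $x^*$ is the unique minimizer of $F$ over $\ker(\mathbf{W})$, $y^*:=-\nabla F(x^* )\in\mathrm{range}(\mathbf{W})$. $\mathrm{D}_F(u,v):=F(u)-F(v)-\langle\nabla F(v),u-v\rangle$. APAPC: given $x^0\in\mathbb{R}^{nd}$, $y^0\in\mathrm{range}(\mathbf{W})$, parameters $\eta,\theta,\alpha>0$, $\tau\in(0,1]$, set $x_f^0=x^0$ and for $k\ge0$: $x_g^k=\tau x^k+(1-\tau)x_f^k$; $x^{k+1/2}=(1+\eta\alpha)^{-1}(x^k-\eta(\nabla F(x_g^k)-\alpha x_g^k+y^k))$; $y^{k+1}=y^k+\theta\mathbf{W}x^{k+1/2}$; $x^{k+1}=(1+\eta\alpha)^{-1}(x^k-\eta(\nabla F(x_g^k)-\alpha x_g^k+y^{k+1}))$; $x_f^{k+1}=x_g^k+\frac{2\tau}{2-\tau}(x^{k+1}-x^k)$. *)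

From HB Require Import structures.
From mathcomp Require Import all_boot all_order all_algebra.
From mathcomp Require Import reals.
Set Implicit Arguments. Unset Strict Implicit. Unset Printing Implicit Defensive.
Import Order.TTheory GRing.Theory Num.Theory.
Local Open Scope ring_scope.

Section APAPC.
Variables (R : realType) (N : nat).
(* Vectors of R^N are column vectors 'cV[R]_N, with N = n*d. *)

Definition dotv (u v : 'cV[R]_N) : R := (u^T *m v) 0 0.
Definition sqnorm (u : 'cV[R]_N) : R := dotv u u.
Definition normv (u : 'cV[R]_N) : R := Num.sqrt (sqnorm u).

Definition has_gradient (F : 'cV[R]_N -> R) (g : 'cV[R]_N -> 'cV[R]_N) :=
  forall x (eps : R), 0 < eps -> exists2 delta : R, 0 < delta &
    forall h, normv h < delta ->
      `|F (x + h) - F x - dotv (g x) h| <= eps * normv h.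

Definition strongly_convex (F : 'cV[R]_N -> R) (g : 'cV[R]_N -> 'cV[R]_N) (mu : R) :=
  forall x y, F x + dotv (g x) (y - x) + mu / 2 * sqnorm (y - x) <= F y.

Definition smooth (g : 'cV[R]_N -> 'cV[R]_N) (L : R) :=
  forall x y, normv (g x - g y) <= L * normv (x - y).

Definition bregman (F : 'cV[R]_N -> R) (g : 'cV[R]_N -> 'cV[R]_N) (u v : 'cV[R]_N) :=
  F u - F v - dotv (g v) (u - v).

Definition in_ker (W : 'M[R]_N) (x : 'cV[R]_N) := W *m x = 0.
Definition in_range (W : 'M[R]_N) (u : 'cV[R]_N) := exists z, u = W *m z.

Record state := State { st_x : 'cV[R]_N; st_y : 'cV[R]_N; st_xf : 'cV[R]_N }.

Definition apapc_step (gradF : 'cV[R]_N -> 'cV[R]_N) (W : 'M[R]_N)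
    (eta theta alpha tau : R) (s : state) : state :=
  let x := st_x s in let y := st_y s in let xf := st_xf s in
  let xg := tau *: x + (1 - tau) *: xf in
  let xh := (1 + eta * alpha)^-1 *: (x - eta *: (gradF xg - alpha *: xg + y)) in
  let y' := y + theta *: (W *m xh) in
  let x' := (1 + eta * alpha)^-1 *: (x - eta *: (gradF xg - alpha *: xg + y')) in
  let xf' := xg + (2 * tau / (2 - tau)) *: (x' - x) in
  State x' y' xf'.

Fixpoint apapc (gradF : 'cV[R]_N -> 'cV[R]_N) (W : 'M[R]_N)
    (eta theta alpha tau : R) (x0 y0 : 'cV[R]_N) (k : nat) : state :=
  match k with
  | 0 => State x0 y0 x0
  | k'.+1 => apapc_step gradF W eta theta alpha tau
               (apapc gradF W eta theta alpha tau x0 y0 k')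
  end.

(* Lyapunov function Psi^k; Wdag is the inverse of W restricted to range(W). *)
Definition Psi (F : 'cV[R]_N -> R) (gradF : 'cV[R]_N -> 'cV[R]_N)
    (Wdag : 'M[R]_N) (eta theta alpha tau : R) (xs ys : 'cV[R]_N) (s : state) : R :=
  let dy := st_y s - ys in
  1 / eta * sqnorm (st_x s - xs)
  + dotv ((theta^-1 *: Wdag - ((1 + eta * alpha)^-1 * eta) *: 1%:M) *m dy) dy
  + 2 * (1 - tau) / tau * bregman F gradF (st_xf s) xs.

End APAPC.

(* Consensus space of (R^d)^n, vectors of R^(n*d) indexed by mxvec_index i j
   (i : node, j : coordinate). *)
Definition consensus (R : realType) (n d : nat) (x : 'cV[R]_(n * d)) :=
  forall (i i' : 'I_n) (j : 'I_d), x (mxvec_index i j) 0 = x (mxvec_index i' j) 0.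

From HB Require Import structures.
From mathcomp Require Import all_boot all_order all_algebra.
From mathcomp Require Import reals.
From mathcomp Require Import complex sesquilinear spectral.
From mathcomp Require Import ring lra.
Import Order.TTheory GRing.Theory Num.Theory.
Local Open Scope ring_scope.
Set Implicit Arguments. Unset Strict Implicit.

(* Write one iteration as (x, y, x_f) |-> (x', y', x_f'), with u = y - ys and
   Psi = |x - xs|^2/eta + D(u) + k D_F(x_f, xs), where k = 2(1 - tau)/tau and
   D(u) = <Wdag u, u>/theta - eta/(1 + eta mu) |u|^2 is the dual energy.
   (1) Energy decrease: Psi' + dissipation <= Psi, where the dissipation is
       mu |x' - xs|^2 + mu |x' - x_g|^2 + D_F(xs, x_g) + D_F(x_f', xs)
       + |x' - x|^2/(2 eta).  It combines an exact expansion of the primal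
       update, a dual identity (W Wdag = I on range W, and |W h|^2 <= lmax
       <h, W h>), the accelerated three-point inequality (convexity plus the
       descent lemma) and strong convexity at x_g.
   (2) Contraction margin: delta Psi' <= dissipation, using
       <Wdag u, u> <= |u|^2 / lminp on range W, the cocoercivity of grad F
       and the inequalities satisfied by the chosen parameters.
   Hence (1 + delta) Psi' <= Psi. *)

Section InnerProduct.
Variables (R : realType) (N : nat).
Implicit Types (u v w : 'cV[R]_N) (a b : R).

Lemma dotvE u v : dotv u v = \sum_i u i 0 * v i 0.
Proof. by rewrite /dotv mxE; apply: eq_bigr => i _; rewrite mxE. Qed.

Lemma dotvC u v : dotv u v = dotv v u.
Proof. by rewrite !dotvE; apply: eq_bigr => i _; rewrite mulrC. Qed.

Lemma dotvDl u v w : dotv (u + v) w = dotv u w + dotv v w.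
Proof. by rewrite !dotvE -big_split; apply: eq_bigr => i _; rewrite mxE mulrDl. Qed.

Lemma dotvDr u v w : dotv w (u + v) = dotv w u + dotv w v.
Proof. by rewrite dotvC dotvDl !(dotvC w). Qed.

Lemma dotvZl a u v : dotv (a *: u) v = a * dotv u v.
Proof. by rewrite !dotvE mulr_sumr; apply: eq_bigr => i _; rewrite mxE mulrA. Qed.

Lemma dotvZr a u v : dotv v (a *: u) = a * dotv v u.
Proof. by rewrite dotvC dotvZl dotvC. Qed.

Lemma dotvNl u v : dotv (- u) v = - dotv u v.
Proof. by rewrite -scaleN1r dotvZl mulN1r. Qed.

Lemma dotvNr u v : dotv v (- u) = - dotv v u.
Proof. by rewrite dotvC dotvNl dotvC. Qed.

Lemma dotvBl u v w : dotv (u - v) w = dotv u w - dotv v w.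
Proof. by rewrite dotvDl dotvNl. Qed.

Lemma dotvBr u v w : dotv w (u - v) = dotv w u - dotv w v.
Proof. by rewrite dotvDr dotvNr. Qed.

Lemma dotv0l v : dotv 0 v = 0.
Proof. by rewrite dotvE big1 // => i _; rewrite mxE mul0r. Qed.

Lemma dotv0r v : dotv v 0 = 0.
Proof. by rewrite dotvC dotv0l. Qed.

Lemma dotvv_ge0 u : 0 <= dotv u u.
Proof. by rewrite dotvE sumr_ge0 // => i _; rewrite -expr2 sqr_ge0. Qed.

Lemma dotvv_eq0 u : dotv u u = 0 -> u = 0.
Proof.
rewrite dotvE => /eqP; rewrite psumr_eq0 => [/allP H|i _]; last by rewrite -expr2 sqr_ge0.
apply/matrixP => i j; rewrite ord1 mxE.
by have /implyP := H i (mem_index_enum _); rewrite -expr2 sqrf_eq0 => /(_ isT)/eqP.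
Qed.

Lemma dotv_sym_mul u v (W : 'M[R]_N) : W^T = W -> dotv u (W *m v) = dotv (W *m u) v.
Proof. by move=> HW; rewrite /dotv trmx_mul HW mulmxA. Qed.

Lemma sqnormN u : sqnorm (- u) = sqnorm u.
Proof. by rewrite /sqnorm dotvNl dotvNr opprK. Qed.

Lemma dotv_young u v : 2 * dotv u v <= sqnorm u + sqnorm v.
Proof. have := dotvv_ge0 (u - v); rewrite /sqnorm !dotvBl !dotvBr (dotvC v u); lra. Qed.

Lemma sqnormD_le u v : sqnorm (u + v) <= 2 * sqnorm u + 2 * sqnorm v.
Proof. have := dotv_young u v; rewrite /sqnorm !dotvDl !dotvDr (dotvC v u); lra. Qed.

Lemma normv_ge0 u : 0 <= normv u.
Proof. exact: sqrtr_ge0. Qed.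

Lemma normv_sq u : normv u * normv u = sqnorm u.
Proof. by rewrite -expr2 sqr_sqrtr //; apply: dotvv_ge0. Qed.

Lemma normvZ (t : R) u : 0 <= t -> normv (t *: u) = t * normv u.
Proof.
move=> t0; rewrite /normv /sqnorm dotvZl dotvZr mulrA sqrtrM ?mulr_ge0 //.
by rewrite -expr2 sqrtr_sqr ger0_norm.
Qed.

(* Cauchy-Schwarz, by Young's inequality applied to the normalized vectors. *)
Lemma dotv_cs u v : dotv u v <= normv u * normv v.
Proof.
have [u0|u0] := eqVneq (sqnorm u) 0.
  by rewrite (dotvv_eq0 u0) dotv0l /normv /sqnorm dotv0l sqrtr0 mul0r.
have [v0|v0] := eqVneq (sqnorm v) 0.
  by rewrite (dotvv_eq0 v0) dotv0r /normv /sqnorm dotv0l sqrtr0 mulr0.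
have nu : 0 < normv u by rewrite sqrtr_gt0 lt_neqAle eq_sym u0 dotvv_ge0.
have nv : 0 < normv v by rewrite sqrtr_gt0 lt_neqAle eq_sym v0 dotvv_ge0.
have := dotv_young ((normv u)^-1 *: u) ((normv v)^-1 *: v).
rewrite /sqnorm !dotvZl !dotvZr -/(sqnorm u) -/(sqnorm v) -!normv_sq.
have -> : (normv u)^-1 * ((normv u)^-1 * (normv u * normv u)) = 1.
  by field; rewrite gt_eqF.
have -> : (normv v)^-1 * ((normv v)^-1 * (normv v * normv v)) = 1.
  by field; rewrite gt_eqF.
set t := (normv u)^-1 * ((normv v)^-1 * dotv u v) => ht.
have -> : dotv u v = normv u * normv v * t by rewrite /t; field; rewrite !gt_eqF.
by rewrite -[X in _ <= X]mulr1 ler_wpM2l ?mulr_ge0 ?normv_ge0 //; lra.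
Qed.

End InnerProduct.

(* No differentiability is used beyond the first-order
   convexity inequality, so the descent lemma is proved by discretizing the
   segment [x, x + h] into m pieces and letting m grow. *)
Section ConvexSmooth.
Variables (R : realType) (N : nat).
Variables (F : 'cV[R]_N -> R) (g : 'cV[R]_N -> 'cV[R]_N) (L : R).
Hypothesis L0 : 0 < L.
Hypothesis hconv : forall x y, F x + dotv (g x) (y - x) <= F y.
Hypothesis hsm : smooth g L.
Implicit Types (x y h u v : 'cV[R]_N).

(* One step along the chord: convexity at the right end point bounds the
   increment by the gradient there, which is within L (k+1)/m |h| of g x. *)
Lemma chord_step x h (m k : nat) : (0 < m)%N ->
  F (x + (k.+1%:R / m%:R) *: h) <= F (x + (k%:R / m%:R) *: h) + m%:R^-1 * dotv (g x) h
                + m%:R^-1 * (L * (k.+1%:R / m%:R) * sqnorm h).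
Proof.
move=> m0; pose p (j : nat) := x + (j%:R / m%:R) *: h; rewrite -/(p k) -/(p k.+1).
have mR : 0 < m%:R :> R by rewrite ltr0n.
have back : p k - p k.+1 = - (m%:R^-1 *: h).
  rewrite /p opprD addrACA subrr add0r -scalerBl -scaleNr; congr (_ *: _).
  by rewrite -natr1; field; rewrite gt_eqF.
have conv := hconv (p k.+1) (p k).
rewrite back dotvNr -[g (p k.+1)](subrK (g x)) dotvDl !dotvZr in conv.
have lip : normv (g (p k.+1) - g x) <= L * (k.+1%:R / m%:R * normv h).
  have -> : L * (k.+1%:R / m%:R * normv h) = L * normv (p k.+1 - x).
    by rewrite /p addrAC subrr add0r normvZ // divr_ge0 ?ler0n.
  exact: hsm.
have gap : dotv (g (p k.+1) - g x) h <= L * (k.+1%:R / m%:R) * sqnorm h.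
  apply: le_trans (dotv_cs _ _) _.
  by rewrite -normv_sq mulrA ler_wpM2r ?normv_ge0 // -mulrA.
have : m%:R^-1 * dotv (g (p k.+1) - g x) h <= m%:R^-1 * (L * (k.+1%:R / m%:R) * sqnorm h).
  by rewrite ler_wpM2l // invr_ge0 ltW.
lra.
Qed.

(* Summing m chord steps gives the descent lemma up to a factor (m+1)/m. *)
Lemma descent_discrete x h (m : nat) : (0 < m)%N ->
  F (x + h) <= F x + dotv (g x) h + L * sqnorm h * (m.+1%:R / (2 * m%:R)).
Proof.
move=> m0.
have mR : 0 < m%:R :> R by rewrite ltr0n.
pose p (k : nat) := x + (k%:R / m%:R) *: h.
suff partial : forall k, F (p k) <= F x + (k%:R / m%:R) * dotv (g x) h
           + L * sqnorm h * ((k%:R * k.+1%:R) / (2 * m%:R * m%:R)).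
  have := partial m; rewrite /p divff ?gt_eqF // scale1r mul1r.
  suff -> : m%:R * m.+1%:R / (2 * m%:R * m%:R) = m.+1%:R / (2 * m%:R) :> R by [].
  by field; rewrite gt_eqF.
elim=> [|k IH]; first by rewrite /p !(mul0r, mulr0, scale0r, addr0).
apply: le_trans (chord_step x h k m0) _.
suff -> : L * sqnorm h * (k.+1%:R * k.+2%:R / (2 * m%:R * m%:R)) =
   L * sqnorm h * (k%:R * k.+1%:R / (2 * m%:R * m%:R))
   + m%:R^-1 * (L * (k.+1%:R / m%:R) * sqnorm h).
  have -> : k.+1%:R / m%:R = k%:R / m%:R + m%:R^-1 :> R.
    by rewrite -natr1; field; rewrite gt_eqF.
  lra.
by rewrite -[k.+2]addn1 -[k.+1]addn1 !natrD; field; rewrite gt_eqF.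
Qed.

Lemma descent x h : F (x + h) <= F x + dotv (g x) h + L / 2 * sqnorm h.
Proof.
set E := F (x + h) - F x - dotv (g x) h.
set K := L / 2 * sqnorm h.
have K0 : 0 <= K by rewrite mulr_ge0 ?dotvv_ge0 // divr_ge0 // ltW.
suff : E <= K by rewrite /E; lra.
rewrite leNgt; apply/negP => EK.
have d0 : 0 < E - K by rewrite subr_gt0.
(* choose m with K / m < E - K and contradict the discrete descent bound *)
set m := Num.Def.archi_bound (K / (E - K)).
have hm : K / (E - K) < m%:R := archi_boundP (divr_ge0 K0 (ltW d0)).
have m0 : (0 < m)%N by rewrite -(ltr0n R); apply: le_lt_trans hm; rewrite divr_ge0 // ltW.
have mR : 0 < m%:R :> R by rewrite ltr0n.
have := descent_discrete x h m0.
have -> : L * sqnorm h * (m.+1%:R / (2 * m%:R)) = K + K / m%:R.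
  by rewrite /K -natr1; field; rewrite gt_eqF.
rewrite -/E => HE.
move: hm; rewrite ltr_pdivrMr // -ltr_pdivrMl // => hm.
have : E <= K + K / m%:R by rewrite /E; lra.
lra.
Qed.

Lemma cocoercive u v :
  sqnorm (g u - g v) / (2 * L) <= F u - F v - dotv (g v) (u - v).
Proof.
set d := g u - g v.
have down := descent u (- (L^-1 *: d)).
have up := hconv v (u - L^-1 *: d).
rewrite /sqnorm !dotvNl !dotvNr opprK !dotvZl !dotvZr in down.
rewrite addrAC dotvBr dotvZr in up.
have split_gu : dotv (g u) d = dotv (g v) d + sqnorm d.
  by rewrite /d /sqnorm !dotvBl !dotvBr (dotvC (g v) (g u)); ring.
rewrite split_gu in down.
have e : L / 2 * (L^-1 * (L^-1 * dotv d d)) = sqnorm d / (2 * L).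
  by rewrite /sqnorm; field; rewrite gt_eqF.
have e2 : L^-1 * (dotv (g v) d + sqnorm d) = L^-1 * dotv (g v) d + 2 * (sqnorm d / (2 * L)).
  by field; rewrite gt_eqF.
rewrite e e2 in down.
lra.
Qed.

End ConvexSmooth.

Section StronglyConvex.
Variables (R : realType) (N : nat).
Variables (F : 'cV[R]_N -> R) (g : 'cV[R]_N -> 'cV[R]_N) (mu : R).
Hypothesis mu0 : 0 <= mu.
Hypothesis hsc : strongly_convex F g mu.

Lemma strongly_convex_convex x y : F x + dotv (g x) (y - x) <= F y.
Proof.
by apply: le_trans (hsc x y); rewrite lerDl mulr_ge0 ?dotvv_ge0 ?divr_ge0.
Qed.

Lemma bregman_ge0 u v : 0 <= bregman F g u v.
Proof. by have := strongly_convex_convex v u; rewrite /bregman; lra. Qed.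

Lemma bregman_sym_ge u v : mu * sqnorm (u - v) <= bregman F g u v + bregman F g v u.
Proof.
have := hsc u v; have := hsc v u.
rewrite -(sqnormN (u - v)) opprB /bregman; lra.
Qed.

End StronglyConvex.

(* Spectral calculus for a real symmetric matrix W: diagonalizing W over R[i]
   by a unitary P, every inner product <W^a v, W^b v> becomes
   sum_i lambda_i^(a+b) c_i with eigenvalues lambda_i of W and weights c_i >= 0. *)
Section SpectralCalculus.
Variables (R : realType) (N : nat) (W : 'M[R]_N).
Hypothesis Wsym : W^T = W.
Local Notation C := (R[i]).
Local Notation toC := (real_complex R).

Let Wc : 'M[C]_N := map_mx toC W.

Lemma Wc_hermitian : Wc \is hermsymmx.
Proof.
apply: realsym_hermsym.
  apply/is_hermitianmxP; rewrite expr0 scale1r map_mx_id // /Wc.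
  by rewrite map_trmx Wsym.
apply/mxOverP => i j; rewrite mxE; apply/complex_realP; eexists; reflexivity.
Qed.

Let P := spectralmx Wc.
Let D := spectral_diag Wc.

Lemma P_unitary : P \is unitarymx.
Proof. exact: spectral_unitarymx. Qed.

Lemma P_unit : P \in unitmx.
Proof. exact: spectral_unit. Qed.

Lemma P_diagonalizes : P *m Wc = diag_mx D *m P.
Proof.
have -> : Wc = invmx P *m diag_mx D *m P.
  exact/orthomx_spectralP/hermitian_normalmx/Wc_hermitian.
by rewrite !mulmxA mulmxV ?P_unit // mul1mx.
Qed.

Lemma D_real i : D 0 i \is Num.real.
Proof. by have /mxOverP := hermitian_spectral_diag_real Wc_hermitian; apply. Qed.

Definition eigcoord (v : 'cV[R]_N) := P *m map_mx toC v.

Lemma eigcoord_iter (v : 'cV[R]_N) a i :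
  (P *m map_mx toC (iter a (mulmx W) v)) i 0 = D 0 i ^+ a * eigcoord v i 0.
Proof.
elim: a i => [|a IH] i /=; first by rewrite expr0 mul1r.
rewrite map_mxM -/Wc mulmxA P_diagonalizes -mulmxA mul_diag_mx mxE IH.
by rewrite exprS mulrA.
Qed.

Lemma dotv_eigcoord (a b : 'cV[R]_N) :
  toC (dotv a b) = \sum_i ((P *m map_mx toC a) i 0)^* * (P *m map_mx toC b) i 0.
Proof.
have PtP : (P ^t* )%sesqui *m P = 1%:M.
  by rewrite -invmx_unitary ?P_unitary // mulVmx ?P_unit.
have -> : toC (dotv a b) = ((map_mx toC a)^T *m map_mx toC b) 0 0.
  by rewrite /dotv !mxE rmorph_sum; apply: eq_bigr => k _; rewrite rmorphM !mxE.
have -> : (map_mx toC a)^T *m map_mx toC b =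
   ((map_mx toC a)^T *m (P ^t* )%sesqui) *m (P *m map_mx toC b).
  by rewrite mulmxA -(mulmxA _ (P ^t* )%sesqui) PtP mulmx1.
rewrite mxE; apply: eq_bigr => i _; congr (_ * _).
rewrite !mxE rmorph_sum; apply: eq_bigr => j _.
rewrite rmorphM mulrC !mxE; congr (_ * _); symmetry; apply: conj_Creal.
by apply/complex_realP; exists (a j 0).
Qed.

Definition eigval i := complex.Re (D 0 i).
Definition eigweight v i := complex.Re ((eigcoord v i 0)^* * eigcoord v i 0).

Lemma eigweight_ge0 v i : 0 <= eigweight v i.
Proof.
rewrite -ler0c /eigweight RRe_real; last by apply: ger0_real; rewrite mulrC mul_conjC_ge0.
by rewrite mulrC mul_conjC_ge0.
Qed.

Lemma dotv_iter_spectral (v : 'cV[R]_N) a b :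
  dotv (iter a (mulmx W) v) (iter b (mulmx W) v) =
  \sum_i eigval i ^+ (a + b) * eigweight v i.
Proof.
apply: (@complexI R); rewrite dotv_eigcoord rmorph_sum.
have conjXM (x y : C) k : x \is Num.real -> (x ^+ k * y)^* = x ^+ k * y^*.
  by move=> xr; rewrite rmorphM rmorphXn; congr (_ ^+ _ * _); apply: conj_Creal.
apply: eq_bigr => i _; rewrite !eigcoord_iter conjXM ?D_real //.
set z := eigcoord v i 0.
have -> : D 0 i ^+ a * z^* * (D 0 i ^+ b * z) = D 0 i ^+ (a + b) * (z^* * z).
  by rewrite exprD; ring.
rewrite rmorphM rmorphXn; congr (_ ^+ _ * _); symmetry; apply: RRe_real.
  exact: D_real.
by apply: ger0_real; rewrite mulrC mul_conjC_ge0.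
Qed.

Lemma eigval_eigenvalue i : eigenvalue W (eigval i).
Proof.
have ec : eigenvalue Wc (D 0 i).
  apply/eigenvalueP; exists (row i P).
    by rewrite -row_mul P_diagonalizes; apply/matrixP => k j; rewrite mul_diag_mx !mxE.
  apply/eqP => h0; have := unitarymxP P_unitary.
  move=> /(congr1 (row i)); rewrite row_mul h0 mul0mx => /matrixP /(_ 0 i).
  by rewrite !mxE eqxx /= => /eqP; rewrite eq_sym oner_eq0.
have re_D : toC (eigval i) = D 0 i by rewrite /eigval RRe_real // D_real.
rewrite eigenvalue_root_char -(fmorph_root toC).
by move: ec; rewrite eigenvalue_root_char /Wc -map_char_poly -re_D.
Qed.

End SpectralCalculus.

Section SpectralBounds.
Variables (R : realType) (N : nat) (W : 'M[R]_N).
Hypothesis Wsym : W^T = W.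
Hypothesis Wpsd : forall x : 'cV[R]_N, 0 <= dotv x (W *m x).

Lemma eigenvalue_ge0 r : eigenvalue W r -> 0 <= r.
Proof.
move=> /eigenvalueP [v hv v0].
have Wv : W *m v^T = r *: v^T by rewrite -{1}Wsym -trmx_mul hv linearZ.
have pos : 0 < dotv v^T v^T.
  rewrite lt_neqAle dotvv_ge0 andbT; apply/eqP => /esym /dotvv_eq0 v0'.
  by move: v0; rewrite -(trmxK v) v0' trmx0 eqxx.
by have := Wpsd v^T; rewrite Wv dotvZr pmulr_lge0.
Qed.

Lemma sqnorm_mul_le lmax : (forall a, eigenvalue W a -> a <= lmax) ->
  forall h : 'cV[R]_N, sqnorm (W *m h) <= lmax * dotv h (W *m h).
Proof.
move=> hl h.
have e1 := dotv_iter_spectral Wsym h 1 1; have e2 := dotv_iter_spectral Wsym h 0 1.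
rewrite /= in e1 e2; rewrite /sqnorm e1 e2 mulr_sumr; apply: ler_sum => i _.
have x0 := eigenvalue_ge0 (eigval_eigenvalue Wsym i).
have xl := hl _ (eigval_eigenvalue Wsym i).
have c0 := eigweight_ge0 W h i.
rewrite add0n expr1 -subr_ge0 addn1 expr2.
have -> : lmax * (eigval W i * eigweight W h i) - eigval W i * eigval W i * eigweight W h i
    = eigval W i * eigweight W h i * (lmax - eigval W i) by ring.
by rewrite !mulr_ge0 // subr_ge0.
Qed.

(* On range(W), W is bounded below by lminp: <W z', W z'> >= lminp <z', W z'> for
   z' = W z, stated as <W z, W (W z)> <= |W (W z)|^2 / lminp. *)
Lemma dotv_range_le lminp : 0 < lminp ->
  (forall a, eigenvalue W a -> 0 < a -> lminp <= a) ->
  forall z : 'cV[R]_N,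
  dotv (W *m z) (W *m (W *m z)) <= sqnorm (W *m (W *m z)) / lminp.
Proof.
move=> l0 hl z.
have e1 := dotv_iter_spectral Wsym z 1 2; have e2 := dotv_iter_spectral Wsym z 2 2.
rewrite /= in e1 e2; rewrite /sqnorm e1 e2 mulr_suml; apply: ler_sum => i _.
have x0 := eigenvalue_ge0 (eigval_eigenvalue Wsym i).
have c0 := eigweight_ge0 W z i.
set x := eigval W i in x0 *; set c := eigweight W z i in c0 *.
have [->|xp] := eqVneq x 0; first by rewrite !expr0n /= !mul0r.
have xpos : 0 < x by rewrite lt_neqAle eq_sym xp.
have lx : lminp <= x := hl _ (eigval_eigenvalue Wsym i) xpos.
rewrite -subr_ge0.
have -> : x ^+ (2 + 2) * c / lminp - x ^+ (1 + 2) * c = x ^+ 3 * c * ((x - lminp) / lminp).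
  by rewrite /=; field; rewrite gt_eqF.
by rewrite !mulr_ge0 ?exprn_ge0 ?subr_ge0 ?invr_ge0 // ltW.
Qed.

End SpectralBounds.

Section RangeKernel.
Variables (R : realType) (N : nat) (W : 'M[R]_N).
Hypothesis Wsym : W^T = W.

Lemma in_rangeD u v : in_range W u -> in_range W v -> in_range W (u + v).
Proof. by move=> [a ->] [b ->]; exists (a + b); rewrite mulmxDr. Qed.

Lemma in_rangeZ (t : R) u : in_range W u -> in_range W (t *: u).
Proof. by move=> [a ->]; exists (t *: a); rewrite scalemxAr. Qed.

Lemma in_rangeN u : in_range W u -> in_range W (- u).
Proof. by move=> h; rewrite -scaleN1r; apply: in_rangeZ. Qed.

Lemma in_rangeW x : in_range W (W *m x).
Proof. by exists x. Qed.

(* A vector orthogonal to ker(W) lies in range(W), via the cokernel of W. *)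
Lemma orth_ker_in_range u : (forall k, in_ker W k -> dotv u k = 0) -> in_range W u.
Proof.
move=> orth; have : (u^T <= W)%MS.
  rewrite submxE; apply/eqP/matrixP => i j; rewrite (ord1 i) [RHS]mxE.
  have hk : in_ker W (col j (cokermx W)).
    by rewrite /in_ker colE mulmxA mulmx_coker mul0mx.
  by rewrite -(orth _ hk) /dotv !mxE; apply: eq_bigr => k _; rewrite !mxE.
move/submxP => [D hD]; exists D^T.
by rewrite -{1}Wsym -trmx_mul -hD trmxK.
Qed.

End RangeKernel.

Section Optimality.
Variables (R : realType) (N : nat).
Variables (F : 'cV[R]_N -> R) (g : 'cV[R]_N -> 'cV[R]_N) (L : R) (W : 'M[R]_N).
Variable xs : 'cV[R]_N.
Hypothesis L0 : 0 < L.
Hypothesis hconv : forall x y, F x + dotv (g x) (y - x) <= F y.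
Hypothesis hsm : smooth g L.
Hypothesis Wsym : W^T = W.
Hypothesis hxs : in_ker W xs.
Hypothesis hmin : forall x, in_ker W x -> F xs <= F x.

(* Moving from xs along k in ker(W) by the step t = -p/(Lq+1), where
   p = <g xs, k> and q = |k|^2, would decrease F by a multiple of p^2. *)
Lemma grad_orth_ker k : in_ker W k -> dotv (g xs) k = 0.
Proof.
move=> hk; set p := dotv (g xs) k; set q := sqnorm k.
have q0 : 0 <= q by apply: dotvv_ge0.
have Lq : 0 <= L * q by rewrite mulr_ge0 // ltW.
set t := - p / (L * q + 1).
have hker : in_ker W (xs + t *: k).
  by rewrite /in_ker mulmxDr -scalemxAr hxs hk scaler0 addr0.
have := descent L0 hconv hsm xs (t *: k).
rewrite dotvZr /sqnorm dotvZl dotvZr -/p -/(sqnorm k) -/q => down.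
have gain : 0 <= - (p ^+ 2) * (L * q / 2 + 1).
  have -> : - (p ^+ 2) * (L * q / 2 + 1) =
      (t * p + L / 2 * (t * (t * q))) * (L * q + 1) ^+ 2.
    by rewrite /t; field; rewrite gt_eqF //; lra.
  by rewrite mulr_ge0 ?exprn_ge0 //; [have := hmin hker; lra | lra].
move: gain; rewrite pmulr_lge0; last by lra.
by rewrite oppr_ge0 => p2; apply/eqP; rewrite -sqrf_eq0 eq_le p2 sqr_ge0.
Qed.

Lemma grad_in_range : in_range W (g xs).
Proof. by apply: orth_ker_in_range => // k; apply: grad_orth_ker. Qed.

End Optimality.

(* With chi = lmax / lminp >= 1,
   A = sqrt (mu/L chi), B = sqrt (mu/L / chi) = A / chi, tau = min(1, A/2) and a
   rate delta <= min(B, 1/chi) / 4, we derive every inequality between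
   tau, eta = 1/(4 tau L), theta = 1/(eta lmax) and delta used by one step. *)
Section StepSizes.
Variable R : realType.

Lemma rate_bounds (mu L chi A B delta tau : R) :
  0 < mu -> mu <= L -> 1 <= chi -> 0 <= A -> 0 <= B ->
  A * A * L = mu * chi -> A = B * chi -> 0 <= delta -> delta <= B / 4 -> delta * chi <= 4^-1 ->
  (tau = 1 /\ 2 <= A) \/ (tau = A / 2 /\ A < 2) ->
  [/\ 0 < tau, tau <= 1, delta * (4 * tau * L) <= mu / 2,
      delta * (2 * (1 - tau) / tau) <= 1 & (2 * delta * chi <= tau /\ mu <= 4 * tau * L)].
Proof.
move=> mu0 muL chi1 A0 B0 AA AB d0 dB dchi [[-> A2]|[-> A2]].
  split; [lra | lra | | | ].
  - have L0 : 0 < L by lra.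
    have h4 : A * A >= 4.
      have : 0 <= (A - 2) * (A + 2) by apply: mulr_ge0; lra.
      lra.
    have : A * A * L >= 4 * L by rewrite ler_pM2r.
    rewrite AA => h.
    have : 8 * L * (delta * chi) <= 2 * L by nra.
    nra.
  - by rewrite subrr mulr0 mul0r mulr0 ler01.
  - split; lra.
have L0 : 0 < L by lra.
have Apos : 0 < A.
  have AAL : 0 < A * A * L by rewrite AA mulr_gt0 //; lra.
  rewrite lt_neqAle A0 andbT eq_sym; apply/eqP => A00.
  by move: AAL; rewrite A00 !mul0r ltxx.
split; [lra | lra | | | ].
- have e : A * B * L * chi = mu * chi.
    by rewrite -AA {2}AB; ring.
  have e2 : A * B * L = mu.
    by apply: (mulIf (x := chi)); [rewrite gt_eqF //; lra | ].
  have : delta * (A * L) <= B / 4 * (A * L) by apply: ler_wpM2r => //; nra.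
  nra.
- have h : 4 * delta <= A by nra.
  have -> : delta * (2 * (1 - A / 2) / (A / 2)) = 4 * delta * (1 - A / 2) / A.
    by field; rewrite gt_eqF.
  rewrite ler_pdivrMr //; nra.
- split; first by nra.
  have : A * L >= mu by nra.
  lra.
Qed.

Lemma sqrt_rates (mu L chi : R) : 0 < mu -> 0 < L -> 0 < chi ->
  let A := Num.sqrt (mu / L * chi) in let B := Num.sqrt (mu / L * chi^-1) in
  A * A * L = mu * chi /\ A = B * chi.
Proof.
move=> mu0 L0 chi0 A B.
have r0 : 0 <= mu / L by rewrite divr_ge0 // ltW.
have sA : A ^+ 2 = mu / L * chi by rewrite sqr_sqrtr // mulr_ge0 // ltW.
have sB : B ^+ 2 = mu / L * chi^-1 by rewrite sqr_sqrtr // mulr_ge0 // invr_ge0 ltW.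
split; first by rewrite -expr2 sA; field; rewrite gt_eqF.
apply/eqP; rewrite -(@eqrXn2 _ 2 A (B * chi)) ?sqrtr_ge0 ?mulr_ge0 ?sqrtr_ge0 ?ltW //.
by rewrite exprMn sA sB; apply/eqP; field; rewrite !gt_eqF.
Qed.

Lemma rate_le (B chi : R) : 0 <= B -> 0 < chi ->
  let delta := 4^-1 * Num.min B chi^-1 in
  [/\ 0 <= delta, delta <= B / 4 & delta * chi <= 4^-1].
Proof.
move=> B0 chi0 delta; split.
- by rewrite mulr_ge0 ?invr_ge0 // le_min B0 invr_ge0 ltW.
- by rewrite /delta mulrC ler_wpM2r ?invr_ge0 // ge_min lexx.
- have : delta <= 4^-1 * chi^-1 by rewrite /delta ler_wpM2l ?invr_ge0 // ge_min lexx orbT.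
  move/(ler_wpM2r (ltW chi0))/le_trans; apply.
  by rewrite -mulrA mulVf ?gt_eqF // mulr1.
Qed.

Lemma apapc_params (mu L lmax lminp : R) :
  0 < mu -> mu <= L -> 0 < lminp -> lminp <= lmax ->
  let tau := Num.min 1 (2^-1 * Num.sqrt (mu / L * (lmax / lminp))) in
  let eta := (4 * tau * L)^-1 in
  let theta := (eta * lmax)^-1 in
  let delta := 4^-1 * Num.min (Num.sqrt (mu / L * (lminp / lmax))) (lminp / lmax) in
  [/\ 0 < tau, tau <= 1, 0 < eta, 0 < theta & [/\ 0 <= delta, delta / eta <= mu / 2,
     delta * (2 * (1 - tau) / tau) <= 1,
     delta / theta / lminp <= eta / 4 &
     [/\ 8 * (delta / theta / lminp) * L <= 1, eta * mu <= 1 & theta^-1 = eta * lmax]]].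
Proof.
move=> mu0 muL l0 ll tau eta theta delta.
have L0 : 0 < L by lra.
set chi := lmax / lminp.
have chi1 : 1 <= chi by rewrite /chi ler_pdivlMr // mul1r.
have chi0 : 0 < chi by lra.
have ichi : lminp / lmax = chi^-1 by rewrite /chi invf_div.
have [AA AB] := sqrt_rates mu0 L0 chi0.
rewrite -ichi in AB.
set A := Num.sqrt (mu / L * chi) in AA AB.
set B := Num.sqrt (mu / L * (lminp / lmax)) in AB.
have [d0 dB dchi] := rate_le (sqrtr_ge0 _ : 0 <= B) chi0.
rewrite -ichi -/B -/delta in d0 dB dchi.
have ht : (tau = 1 /\ 2 <= A) \/ (tau = A / 2 /\ A < 2).
  by rewrite /tau -/A; case: (leP 1 (2^-1 * A)) => h; [left | right]; split => //; lra.
have [t0 t1 delta_eta delta_k [delta_tau mu_le]] :=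
  rate_bounds mu0 muL chi1 (sqrtr_ge0 _) (sqrtr_ge0 _) AA AB d0 dB dchi ht.
have t0' : 0 < 4 * tau * L by rewrite !mulr_gt0.
have e0 : 0 < eta by rewrite invr_gt0.
have ith : theta^-1 = eta * lmax by rewrite invrK.
have eT : delta / theta / lminp = (delta * chi) * eta by rewrite ith /chi; field; rewrite !gt_eqF.
split; rewrite ?invr_gt0 ?mulr_gt0 //; first lra; split => //.
- by rewrite /eta invrK.
- by rewrite eT mulrC ler_wpM2l // ltW.
split => //.
- rewrite eT (_ : 8 * (delta * chi * eta) * L = (2 * delta * chi) / tau).
    by rewrite ler_pdivrMr // mul1r.
  by rewrite /eta; field; rewrite !gt_eqF.
- by rewrite /eta mulrC ler_pdivrMr // mul1r.
Qed.

End StepSizes.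

Section StepIdentities.
Variables (R : realType) (N : nat).
Implicit Types (e d q b w u v h : 'cV[R]_N).

Lemma primal_energy_identity e d q b w (eta mu : R) : eta != 0 ->
  d = - eta *: (b + mu *: q + w) ->
  sqnorm (e + d) / eta = sqnorm e / eta - 2 * dotv b (e + d) - mu * sqnorm (e + d)
    - mu * sqnorm q + mu * sqnorm (e + d - q) - sqnorm d / eta - 2 * dotv w (e + d).
Proof.
move=> e0 hd.
have -> : w = - eta^-1 *: d - b - mu *: q.
  by rewrite hd; apply/matrixP => i j; rewrite !mxE; field.
rewrite /sqnorm !(dotvDl, dotvDr, dotvBl, dotvBr, dotvZl, dotvZr, dotvNl, dotvNr).
rewrite ?(dotvC e d) ?(dotvC e q) ?(dotvC d q) ?(dotvC e b) ?(dotvC d b) ?(dotvC q b).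
by field.
Qed.

Lemma residual_sqnorm_bound d b q w (eta mu : R) : eta != 0 ->
  d = - eta *: (b + mu *: q + w) ->
  sqnorm w <= 2 * sqnorm d / eta ^+ 2 + 4 * sqnorm b + 4 * mu ^+ 2 * sqnorm q.
Proof.
move=> e0 hd.
have -> : w = - eta^-1 *: d + (- b + (- mu) *: q).
  by rewrite hd; apply/matrixP => i j; rewrite !mxE; field.
apply: le_trans (sqnormD_le _ _) _.
have := sqnormD_le (- b) ((- mu) *: q).
rewrite /sqnorm !(dotvZl, dotvZr, dotvNl, dotvNr).
have -> : - eta^-1 * (- eta^-1 * dotv d d) = dotv d d / eta ^+ 2 by field.
have -> : - mu * (- mu * dotv q q) = mu ^+ 2 * dotv q q by ring.
lra.
Qed.

Lemma dual_energy_identity (Wd : 'M[R]_N) u v h (theta c eta : R) : theta != 0 ->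
  dotv (Wd *m u) v = dotv u h -> dotv (Wd *m v) u = dotv h u ->
  dotv (Wd *m v) v = dotv v h ->
  theta^-1 * dotv (Wd *m (u + theta *: v)) (u + theta *: v)
    - c * eta * sqnorm (u + theta *: v) =
  theta^-1 * dotv (Wd *m u) u - c * eta * sqnorm u
  + 2 * dotv (u + theta *: v) (h - (c * eta * theta) *: v)
  + c * eta * theta ^+ 2 * sqnorm v - theta * dotv v h.
Proof.
move=> t0 h1 h2 h3; rewrite mulmxDr -scalemxAr /sqnorm.
rewrite !(dotvDl, dotvDr, dotvBl, dotvBr, dotvZl, dotvZr, dotvNl, dotvNr).
rewrite h1 h2 h3 ?(dotvC h u) ?(dotvC v u) ?(dotvC h v).
by field.
Qed.

End StepIdentities.

Section ThreePoint.
Variables (R : realType) (N : nat).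
Variables (F : 'cV[R]_N -> R) (g : 'cV[R]_N -> 'cV[R]_N) (L : R).
Hypothesis L0 : 0 < L.
Hypothesis hconv : forall x y, F x + dotv (g x) (y - x) <= F y.
Hypothesis hsm : smooth g L.
Variables (tau eta : R) (xs xg xf x x' : 'cV[R]_N).
Hypotheses (t0 : 0 < tau) (t1 : tau <= 1) (e0 : 0 < eta).
Hypothesis heta : eta * (4 * tau * L) = 1.
Hypothesis hxg : xg = tau *: x + (1 - tau) *: xf.

Let k := 2 * (1 - tau) / tau.
Let D u := bregman F g u xs.
Let b := g xg - g xs.

(* The descent lemma along the extrapolation step. *)
Lemma extrapolation_bound :
  (k + 1) * (D (xg + (2 * tau / (2 - tau)) *: (x' - x)) - D xg)
    - sqnorm (x' - x) / (2 * eta) <= 2 * dotv b (x' - x).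
Proof.
set k2 := 2 * tau / (2 - tau); set A := sqnorm (x' - x).
have t2 : 0 < 2 - tau by have := t1; lra.
have k20 : 0 < k2 by rewrite divr_gt0 // mulr_gt0.
have k2le : k2 <= 2 * tau.
  have : 0 <= tau * (1 - tau) by rewrite mulr_ge0 ?subr_ge0 // ltW.
  by rewrite ler_pdivrMr //; nra.
have hk : k + 1 = 2 / k2 by rewrite /k /k2; field; rewrite !gt_eqF.
have A0 : 0 <= A := dotvv_ge0 _.
have down := descent L0 hconv hsm xg (k2 *: (x' - x)).
rewrite /sqnorm !dotvZl !dotvZr -/(sqnorm _) -/A in down.
have step : D (xg + k2 *: (x' - x)) - D xg - L / 2 * (k2 * (k2 * A)) <= k2 * dotv b (x' - x).
  rewrite /D /b /bregman /=.
  have -> : xg + k2 *: (x' - x) - xs = (xg - xs) + k2 *: (x' - x) by rewrite addrAC.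
  rewrite dotvDr dotvZr dotvBl; lra.
have LA : L * k2 * A <= A / (2 * eta).
  have -> : A / (2 * eta) = A * (eta * (4 * tau * L)) / (2 * eta) by rewrite heta mulr1.
  have -> : A * (eta * (4 * tau * L)) / (2 * eta) = 2 * tau * L * A.
    by field; rewrite gt_eqF.
  by rewrite ler_wpM2r // (mulrC _ L) ler_wpM2l // ltW.
have scaled : (k + 1) * (D (xg + k2 *: (x' - x)) - D xg)
    <= 2 * dotv b (x' - x) + L * k2 * A.
  have -> : 2 * dotv b (x' - x) + L * k2 * A =
      (k + 1) * (k2 * dotv b (x' - x) + L / 2 * (k2 * (k2 * A))).
    by rewrite hk; field; rewrite gt_eqF.
  by apply: ler_wpM2l; [rewrite hk divr_ge0 // ltW | lra].
lra.
Qed.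

(* Split x' - xs along x_g - xs, x_g - x_f and x' - x: the first part gives
   D(x_g) + D_F(xs, x_g), the second is bounded by convexity at x_g, the third
   by [extrapolation_bound]. *)
Lemma three_point :
  - (2 * dotv b (x' - xs)) <=
  - D xg - 2 * bregman F g xs xg + k * D xf
  - (k + 1) * D (xg + (2 * tau / (2 - tau)) *: (x' - x)) + sqnorm (x' - x) / (2 * eta).
Proof.
have split_x : x' - xs = (xg - xs) + ((1 - tau) / tau) *: (xg - xf) + (x' - x).
  by rewrite hxg; apply/matrixP => i j; rewrite !mxE; field; rewrite gt_eqF.
have at_xs : dotv b (xg - xs) = D xg + bregman F g xs xg.
  by rewrite /b /D /bregman !(dotvBl, dotvBr); ring.
have at_xf : - dotv b (xg - xf) <= D xf - D xg.
  have := hconv xg xf; rewrite /b /D /bregman !(dotvBl, dotvBr); lra.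
have k0 : 0 <= k by rewrite /k divr_ge0 ?mulr_ge0 ?subr_ge0 // ltW.
have ext := extrapolation_bound.
rewrite split_x dotvDr dotvDr dotvZr at_xs.
have at_xf' : - (k * dotv b (xg - xf)) <= k * (D xf - D xg) by rewrite -mulrN ler_wpM2l.
have ek : 2 * ((1 - tau) / tau * dotv b (xg - xf)) = k * dotv b (xg - xf) by rewrite /k; ring.
lra.
Qed.

End ThreePoint.

Section OneStep.
Variables (R : realType) (N : nat).
Variables (F : 'cV[R]_N -> R) (g : 'cV[R]_N -> 'cV[R]_N) (mu L : R)
  (W Wdag : 'M[R]_N) (lmax lminp : R) (xs : 'cV[R]_N).
Hypothesis mu0 : 0 < mu.
Hypothesis L0 : 0 < L.
Hypothesis hsc : strongly_convex F g mu.
Hypothesis hsm : smooth g L.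
Hypothesis Wsym : W^T = W.
Hypothesis Wpsd : forall x, 0 <= dotv x (W *m x).
Hypothesis hlmax : forall a, eigenvalue W a -> a <= lmax.
Hypothesis l0 : 0 < lminp.
Hypothesis hlm : forall a, eigenvalue W a -> 0 < a -> lminp <= a.
Hypothesis hWd : forall u, in_range W u -> in_range W (Wdag *m u) /\ W *m (Wdag *m u) = u.
Hypothesis hxs : in_ker W xs.
Hypothesis hys : in_range W (g xs).
Variables (tau eta theta delta : R).
Hypotheses (t0 : 0 < tau) (t1 : tau <= 1) (e0 : 0 < eta) (th0 : 0 < theta) (d0 : 0 <= delta).
Hypotheses (rate_primal : delta / eta <= mu / 2)
  (rate_bregman : delta * (2 * (1 - tau) / tau) <= 1)
  (rate_dual : delta / theta / lminp <= eta / 4)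
  (rate_smooth : 8 * (delta / theta / lminp) * L <= 1)
  (eta_mu_le1 : eta * mu <= 1) (ith : theta^-1 = eta * lmax)
  (heta : eta * (4 * tau * L) = 1).

Let hconv := strongly_convex_convex (ltW mu0) hsc.
Let c := (1 + eta * mu)^-1.
Let k := 2 * (1 - tau) / tau.

Let dual (v : 'cV[R]_N) := theta^-1 * dotv (Wdag *m v) v - c * eta * sqnorm v.

Lemma Psi_split s : Psi F g Wdag eta theta mu tau xs (- g xs) s =
  sqnorm (st_x s - xs) / eta + dual (st_y s - - g xs) + k * bregman F g (st_xf s) xs.
Proof.
rewrite /Psi /dual /k /c mulmxBl -!scalemxAl mul1mx dotvBl !dotvZl /sqnorm.
by ring.
Qed.

(* Wdag inverts W on range(W), so <Wdag u, u> <= |u|^2 / lminp there. *)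
Lemma Wdag_bound u : in_range W u -> dotv (Wdag *m u) u <= sqnorm u / lminp.
Proof.
move=> hu; have [[z hz] hW] := hWd hu.
by rewrite hz in hW *; rewrite -hW; apply: dotv_range_le.
Qed.

Lemma Wdag_mul u h : in_range W u -> dotv (Wdag *m u) (W *m h) = dotv u h.
Proof. by move=> hu; rewrite dotv_sym_mul // (hWd hu).2. Qed.

Variables (x y xf : 'cV[R]_N).
Hypothesis hy : in_range W y.

Let xg := tau *: x + (1 - tau) *: xf.
Let xh := c *: (x - eta *: (g xg - mu *: xg + y)).
Let y' := y + theta *: (W *m xh).
Let x' := c *: (x - eta *: (g xg - mu *: xg + y')).
Let xf' := xg + (2 * tau / (2 - tau)) *: (x' - x).
Let u := y - - g xs.
Let u' := y' - - g xs.
Let h := xh - xs.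

Let dissipation := mu * sqnorm (x' - xs) + mu * sqnorm (x' - xg)
  + bregman F g xs xg + bregman F g xf' xs + sqnorm (x' - x) / (2 * eta).

Lemma c_pos : 0 < c.
Proof. by rewrite invr_gt0 ltr_wpDr // mulr_ge0 // ltW. Qed.

Lemma c_le1 : c <= 1.
Proof. by rewrite invf_le1 ?lerDl ?ltr_wpDr ?mulr_ge0 // ltW. Qed.

(* The primal update is an implicit gradient step written at x'. *)
Lemma primal_residual :
  x' - x = - eta *: ((g xg - g xs) + mu *: (x' - xg) + u').
Proof.
have c1 : 1 + eta * mu != 0 by rewrite gt_eqF // ltr_wpDr // mulr_ge0 // ltW.
by apply/matrixP => i j; rewrite /x' /u' /c !mxE; field.
Qed.

Lemma dual_update : u' = u + theta *: (W *m h) /\ x' - xs = h - (c * eta * theta) *: (W *m h).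
Proof.
have Wh : W *m h = W *m xh by rewrite /h mulmxBr hxs subr0.
rewrite Wh; split; apply/matrixP => i j; rewrite /u' /u /y' /x' /h /xh !mxE; ring.
Qed.

Lemma dual_descent : dual u' <= dual u + 2 * dotv u' (x' - xs).
Proof.
have [hu' hx'] := dual_update.
have hu : in_range W u by apply: in_rangeD => //; apply/in_rangeN/in_rangeN.
have f1 : dotv (Wdag *m u) (W *m h) = dotv u h by apply: Wdag_mul.
have f2 : dotv (Wdag *m (W *m h)) u = dotv h u.
  have [z hz] := hu; rewrite [X in dotv _ X]hz Wdag_mul; last exact: in_rangeW.
  by rewrite -dotv_sym_mul // -hz.
have f3 : dotv (Wdag *m (W *m h)) (W *m h) = dotv (W *m h) h.
  by rewrite Wdag_mul //; apply: in_rangeW.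
have tne : theta != 0 by rewrite gt_eqF.
have := dual_energy_identity c eta tne f1 f2 f3.
rewrite -hu' -hx' /dual => ->.
suff : c * eta * theta ^+ 2 * sqnorm (W *m h) <= theta * dotv (W *m h) h by lra.
have p0 : 0 <= dotv (W *m h) h by rewrite dotvC.
have e1 : eta * lmax * theta = 1 by rewrite -ith mulVf // gt_eqF.
apply: le_trans (_ : c * eta * theta ^+ 2 * (lmax * dotv h (W *m h)) <= _).
  by rewrite ler_wpM2l ?sqnorm_mul_le // !mulr_ge0 ?exprn_ge0 ?ltW ?c_pos.
rewrite (dotvC h) (_ : _ * (lmax * _) = c * theta * dotv (W *m h) h * (eta * lmax * theta)).
  rewrite e1 mulr1 -mulrA -[X in _ <= X]mul1r.
  by apply: ler_wpM2r; [rewrite mulr_ge0 // ltW | exact: c_le1].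
by ring.
Qed.

Lemma energy_decrease :
  sqnorm (x' - xs) / eta + dual u' + k * bregman F g xf' xs + dissipation
  <= sqnorm (x - xs) / eta + dual u + k * bregman F g xf xs.
Proof.
have ene : eta != 0 by rewrite gt_eqF.
have primal := primal_energy_identity (x - xs) ene primal_residual.
have e1 : x - xs + (x' - x) = x' - xs by rewrite addrC -addrA addKr.
have e2 : x' - xs - (x' - xg) = xg - xs by rewrite opprB addrC addrA subrK.
rewrite e1 e2 in primal.
have acc := three_point L0 hconv hsm xs x' t0 t1 e0 heta (erefl xg).
have sym := bregman_sym_ge hsc xg xs.
have dual_dec := dual_descent.
have half : sqnorm (x' - x) / eta = 2 * (sqnorm (x' - x) / (2 * eta)) by field; rewrite gt_eqF.
rewrite /dissipation -/xf' -/k in acc *; lra.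
Qed.

(* The dual residual |u'|^2, weighted by delta / (theta lminp), is paid for by the
   dissipation through the implicit-step relation and cocoercivity. *)
Lemma residual_margin :
  delta / theta / lminp * sqnorm u'
  <= sqnorm (x' - x) / (2 * eta) + bregman F g xs xg + mu * sqnorm (x' - xg).
Proof.
have ene : eta != 0 by rewrite gt_eqF.
have res := residual_sqnorm_bound ene primal_residual.
have coco : sqnorm (g xg - g xs) <= 2 * L * bregman F g xs xg.
  have := cocoercive L0 hconv hsm xs xg.
  by rewrite -sqnormN opprB ler_pdivrMr ?mulr_gt0 // mulrC.
set T := delta / theta / lminp; set A := sqnorm (x' - x) in res *.
set B := sqnorm (x' - xg) in res *; set Dgs := bregman F g xs xg in coco *.
have T0 : 0 <= T by rewrite !divr_ge0 // ltW.
have Dgs0 : 0 <= Dgs := bregman_ge0 (ltW mu0) hsc xs xg.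
have tA : T * (2 * A / eta ^+ 2) <= A / (2 * eta).
  have -> : A / (2 * eta) = eta / 4 * (2 * A / eta ^+ 2) by field; rewrite gt_eqF.
  by rewrite ler_wpM2r // !mulr_ge0 ?invr_ge0 ?exprn_ge0 ?dotvv_ge0 // ltW.
have tB : T * (4 * sqnorm (g xg - g xs)) <= Dgs.
  apply: le_trans (_ : T * (4 * (2 * L * Dgs)) <= _); first by rewrite !ler_wpM2l.
  have -> : T * (4 * (2 * L * Dgs)) = 8 * T * L * Dgs by ring.
  by rewrite -[X in _ <= X]mul1r ler_wpM2r.
have tC : T * (4 * mu ^+ 2 * B) <= mu * B.
  have B0 : 0 <= 4 * mu ^+ 2 * B by rewrite !mulr_ge0 ?exprn_ge0 ?dotvv_ge0 // ltW.
  apply: le_trans (_ : eta / 4 * (4 * mu ^+ 2 * B) <= _); first by rewrite ler_wpM2r.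
  have -> : eta / 4 * (4 * mu ^+ 2 * B) = eta * mu * (mu * B) by field.
  by rewrite -[X in _ <= X]mul1r ler_wpM2r // mulr_ge0 ?dotvv_ge0 // ltW.
have := ler_wpM2l T0 res.
rewrite !mulrDr; lra.
Qed.

Lemma contraction_margin :
  delta * (sqnorm (x' - xs) / eta + dual u' + k * bregman F g xf' xs) <= dissipation.
Proof.
have P0 : 0 <= sqnorm (x' - xs) := dotvv_ge0 _.
have Dfn0 : 0 <= bregman F g xf' xs := bregman_ge0 (ltW mu0) hsc xf' xs.
have primal : delta * (sqnorm (x' - xs) / eta) <= mu / 2 * sqnorm (x' - xs).
  have -> : delta * (sqnorm (x' - xs) / eta) = delta / eta * sqnorm (x' - xs) by ring.
  exact: ler_wpM2r.
have breg : delta * (k * bregman F g xf' xs) <= bregman F g xf' xs.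
  by rewrite mulrA -[X in _ <= X]mul1r ler_wpM2r.
have dual_part : delta * dual u' <= delta / theta / lminp * sqnorm u'.
  have hu' : in_range W u'.
    by rewrite (dual_update).1; apply: in_rangeD; [apply: in_rangeD => //; apply/in_rangeN/in_rangeN
      | apply/in_rangeZ/in_rangeW].
  have cu : 0 <= c * eta * sqnorm u' by rewrite !mulr_ge0 ?dotvv_ge0 ?ltW ?c_pos.
  apply: le_trans (_ : delta / theta * dotv (Wdag *m u') u' <= _).
    by rewrite /dual mulrBr mulrA; have := mulr_ge0 d0 cu; lra.
  have -> : delta / theta / lminp * sqnorm u' = delta / theta * (sqnorm u' / lminp) by ring.
  by rewrite ler_wpM2l ?Wdag_bound // divr_ge0 // ltW.
have := residual_margin; have mP : 0 <= mu * sqnorm (x' - xs) by rewrite mulr_ge0 // ltW.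
rewrite /dissipation; lra.
Qed.

Lemma step_contraction :
  (1 + delta) * Psi F g Wdag eta theta mu tau xs (- g xs)
                  (apapc_step g W eta theta mu tau (State x y xf))
  <= Psi F g Wdag eta theta mu tau xs (- g xs) (State x y xf).
Proof.
have -> : apapc_step g W eta theta mu tau (State x y xf) = State x' y' xf' by [].
rewrite !Psi_split /=; have := energy_decrease; have := contraction_margin.
rewrite -/u -/u'; lra.
Qed.

End OneStep.

(* The dual iterates never leave range(W), since each update adds theta W x. *)
Lemma apapc_dual_in_range (R : realType) (N : nat) (g : 'cV[R]_N -> 'cV[R]_N)
    (W : 'M[R]_N) (eta theta alpha tau : R) (x0 y0 : 'cV[R]_N) :
  in_range W y0 -> forall j, in_range W (st_y (apapc g W eta theta alpha tau x0 y0 j)).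
Proof.
move=> hy0; elim=> [//|j IH] /=.
by apply: in_rangeD => //; apply/in_rangeZ/in_rangeW.
Qed.

Unset Implicit Arguments.

Theorem mainTheorem8 (R : realType) (n d : nat)
  (F : 'cV[R]_(n * d) -> R) (gradF : 'cV[R]_(n * d) -> 'cV[R]_(n * d))
  (mu L : R) (W Wdag : 'M[R]_(n * d)) (lmax lminp : R)
  (xs x0 y0 : 'cV[R]_(n * d)) :
  has_gradient F gradF ->
  0 < mu -> mu <= L ->
  strongly_convex F gradF mu ->
  smooth gradF L ->
  W^T = W ->
  (forall x, 0 <= dotv x (W *m x)) ->
  (forall x, in_ker W x <-> consensus x) ->
  (* lmax = largest eigenvalue of W, lminp = smallest positive eigenvalue *)
  eigenvalue W lmax -> (forall a, eigenvalue W a -> a <= lmax) ->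
  eigenvalue W lminp -> 0 < lminp ->
  (forall a, eigenvalue W a -> 0 < a -> lminp <= a) ->
  (* Wdag is the inverse of W restricted to range(W) *)
  (forall u, in_range W u -> in_range W (Wdag *m u) /\ W *m (Wdag *m u) = u) ->
  (* xs is the (unique) minimizer of F over ker W *)
  in_ker W xs -> (forall x, in_ker W x -> F xs <= F x) ->
  in_range W y0 ->
  let ys := - gradF xs in
  let tau := Num.min 1 (2^-1 * Num.sqrt (mu / L * (lmax / lminp))) in
  let eta := (4 * tau * L)^-1 in
  let theta := (eta * lmax)^-1 in
  let alpha := mu in
  forall k : nat,
    Psi F gradF Wdag eta theta alpha tau xs ys
        (apapc gradF W eta theta alpha tau x0 y0 k.+1)
    <= (1 + 4^-1 * Num.min (Num.sqrt (mu / L * (lminp / lmax))) (lminp / lmax))^-1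
       * Psi F gradF Wdag eta theta alpha tau xs ys
        (apapc gradF W eta theta alpha tau x0 y0 k).
Proof.
move=> _ mu0 muL hsc hsm Wsym Wpsd _ _ hlmax hlmin l0 hlm hWd hxs hmin hy0.
move=> ys tau eta theta alpha k.
have L0 : 0 < L by apply: lt_le_trans muL.
have [t0 t1 e0 th0 [d0 rate_primal rate_bregman rate_dual
    [rate_smooth eta_mu_le1 ith]]] := apapc_params mu0 muL l0 (hlmax _ hlmin).
set delta := 4^-1 * Num.min _ _ in d0 rate_primal rate_bregman rate_dual rate_smooth *.
have heta : eta * (4 * tau * L) = 1 by rewrite mulVf // gt_eqF // !mulr_gt0.
have hys := grad_in_range L0 (strongly_convex_convex (ltW mu0) hsc) hsm Wsym hxs hmin.
have := apapc_dual_in_range gradF eta theta alpha tau x0 hy0 k.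
rewrite [apapc _ _ _ _ _ _ _ _ k.+1]/=.
case: (apapc gradF W eta theta alpha tau x0 y0 k) => x y xf /= hy.
have step := step_contraction mu0 L0 hsc hsm Wsym Wpsd hlmax l0 hlm hWd hxs hys
  t0 t1 e0 th0 d0 rate_primal rate_bregman rate_dual rate_smooth eta_mu_le1 ith heta x xf hy.
have d1 : 0 < 1 + delta by apply: (lt_le_trans ltr01); rewrite lerDl.
by rewrite -(ler_pM2l d1) mulrA mulfV ?gt_eqF // mul1r.
Qed.
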